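(* Let $\mathcal{D}=(\mathcal{P},\mathcal{B},\mathcal{I})$ be a quasi-symmetric $(v,b,r,k,\lambda_1,0)$ SPBIBD of type $(k-1,t)$ with intersection numbers $x=0$ and $y=1$, let $\Gamma$ be its incidence graph, and assume $r\ge3$. Then: (i) $\Gamma$ is almost $2$-$\mathcal{B}$-homogeneous if and only if $\mathcal{D}$ is a generalized quadrangle; (ii) $\Gamma$ is not $2$-$\mathcal{B}$-homogeneous.
   Context: A design $\mathcal{D}=(\mathcal{P},\mathcal{B},\mathcal{I})$ is an incidence structure with $|\mathcal{P}|=v$, $|\mathcal{B}|=b$, every block incident with exactly $k$ points and every point with exactly $r$ blocks; standing assumptions: $v>k$ and $r<b$. $(p,B)$ is a flag if $p\in B$, a non-flag otherwise. $\mathcal{D}$ is a $(v,b,r,k,\lambda_1,\lambda_2)$ SPBIBD of type $(s,t)$ if (i) any two distinct points are together in exactly $\lambda_1$ or exactly $\lambda_2$ blocks; (ii) for every flag $(p,B)$, the number of points of $B$ other than $p$ lying with $p$ in exactly $\lambda_1$ blocks is $s$; (iii) for every non-flag $(p,B)$, the number of points of $B$ lying with $p$ in exactly $\lambda_1$ blocks is $t$. Quasi-symmetric with intersection numbers $x<y$: any two distinct blocks share exactly $x$ or $y$ points, both values occurring. A partial geometry is such a design in which any two points are together in at most one block and there is a constant $t'$ ($1\le t'\le r$, $1\le t'\le k$) such that for every non-flag $(p,B)$ exactly $t'$ blocks are incident with $p$ and meet $B$; it is a generalized quadrangle if $t'=1$. The incidence graph is the bipartite graph on $\mathcal{P}\cup\mathcal{B}$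 with $p\sim B$ iff $p\in B$. $\Gamma_i(u)$ is the set of vertices at distance $i$ from $u$, $\Gamma(u)=\Gamma_1(u)$. For a $(Y,Y')$-bipartite graph in which every vertex of $Y$ has eccentricity $D\ge3$: it is almost $2$-$Y$-homogeneous if for each $1\le i\le D-2$ the number $|\Gamma(x)\cap\Gamma(y)\cap\Gamma_{i-1}(z)|$ is the same for all $x\in Y$, $y\in\Gamma_2(x)$, $z\in\Gamma_i(x)\cap\Gamma_i(y)$; $2$-$Y$-homogeneous if this holds for each $1\le i\le D-1$. Here $Y=\mathcal{B}$. *)

From mathcomp Require Import all_boot.
Set Implicit Arguments. Unset Strict Implicit. Unset Printing Implicit Defensive.

Section Designs.
Variables (P B : finType) (I : P -> B -> bool).

Definition lambda (p q : P) : nat := #|[set X : B | I p X && I q X]|.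

Definition is_design (v b r k : nat) : Prop :=
  [/\ #|P| = v, #|B| = b,
      (forall X : B, #|[set p : P | I p X]| = k),
      (forall p : P, #|[set X : B | I p X]| = r) &
      k < v /\ r < b].

Definition is_SPBIBD (v b r k lam1 lam2 s t : nat) : Prop :=
  [/\ is_design v b r k,
      (forall p q : P, p != q -> lambda p q = lam1 \/ lambda p q = lam2),
      (forall (p : P) (X : B), I p X ->
          #|[set q : P | [&& I q X, q != p & lambda p q == lam1]]| = s) &
      (forall (p : P) (X : B), ~~ I p X ->
          #|[set q : P | I q X && (lambda p q == lam1)]| = t)].

Definition quasi_symmetric (x y : nat) : Prop :=
  [/\ x < y,
      (forall X Y : B, X != Y ->
          #|[set p : P | I p X && I p Y]| = x \/ #|[set p : P | I p X && I p Y]| = y),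
      (exists X Y : B, X != Y /\ #|[set p : P | I p X && I p Y]| = x) &
      (exists X Y : B, X != Y /\ #|[set p : P | I p X && I p Y]| = y)].

Definition partial_geometry (r k t' : nat) : Prop :=
  [/\ (forall p q : P, p != q -> lambda p q <= 1),
      1 <= t' <= r, 1 <= t' <= k &
      (forall (p : P) (X : B), ~~ I p X ->
          #|[set Z : B | I p Z && [exists q : P, I q Z && I q X]]| = t')].

Definition generalized_quadrangle (r k : nat) : Prop := partial_geometry r k 1.

End Designs.

Definition incidence_adj (P B : finType) (I : P -> B -> bool) : rel (P + B)%type :=
  fun u w => match u, w with
             | inl p, inr X => I p X
             | inr X, inl p => I p X
             | _, _ => false
             end.

Section Graphs.
Variables (V : finType) (adj : rel V).

Fixpoint ball (u : V) (n : nat) : {set V} :=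
  match n with
  | 0 => [set u]
  | n'.+1 => ball u n' :|: [set w | [exists x in ball u n', adj x w]]
  end.

Definition Gamma_i (u : V) (i : nat) : {set V} :=
  ball u i :\: (if i is j.+1 then ball u j else set0).

Definition eccentricity_is (u : V) (D : nat) : Prop :=
  (forall w : V, w \in ball u D) /\ Gamma_i u D != set0.

Definition hom_at (Y : {set V}) (i : nat) : Prop :=
  exists c : nat, forall x y z : V,
    x \in Y -> y \in Gamma_i x 2 -> z \in Gamma_i x i -> z \in Gamma_i y i ->
    #|Gamma_i x 1 :&: Gamma_i y 1 :&: Gamma_i z i.-1| = c.

Definition almost_2_Y_homogeneous (Y : {set V}) : Prop :=
  exists D : nat, 3 <= D /\ (forall x, x \in Y -> eccentricity_is x D) /\
    (forall i, 1 <= i <= D - 2 -> hom_at Y i).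

Definition two_Y_homogeneous (Y : {set V}) : Prop :=
  exists D : nat, 3 <= D /\ (forall x, x \in Y -> eccentricity_is x D) /\
    (forall i, 1 <= i <= D - 1 -> hom_at Y i).

End Graphs.

Definition block_vertices (P B : finType) : {set (P + B)%type} := [set u | if u is inr _ then true else false].

(* Distinct blocks share at most one point, so seen from a block X the incidence
   graph has the points of X at distance 1, the blocks meeting X at distance 2,
   and the remaining points collinear with a point of X at distance 3.  Disjoint
   blocks exist, so the eccentricity of a block is at least 4; since it is
   finite, some non-flag (q, X) has a block through q meeting X, and as t does
   not depend on the non-flag (and lambda_2 = 0), every non-flag does.
   If two blocks Z1, Z through a point p off X met X, at q1 and q2, the level-2
   count for the pair (X, Z1) would be 1 at a third block through q1 but 0 at Z;
   so level-2 homogeneity forces a generalized quadrangle, in which conversely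
   that count is always 1.  At level 3, for blocks X, Y meeting at p, the count
   at a point z off X and Y is 1 or 0 according as z is collinear with p, and a
   generalized quadrangle with r >= 3 has points of both kinds. *)

From mathcomp Require Import all_boot zify.
Set Implicit Arguments. Unset Strict Implicit. Unset Printing Implicit Defensive.

Lemma card_set1I (T : finType) (a : T) (A : {set T}) : #|[set a] :&: A| = (a \in A : nat).
Proof.
case: (boolP (a \in A)) => aA.
  by rewrite (setIidPl _) ?cards1 // sub1set.
suff -> : [set a] :&: A = set0 by rewrite cards0.
by apply/setP => x; rewrite !inE; case: eqP => // ->; rewrite (negbTE aA).
Qed.

Lemma exists_notin (T : finType) (A S : {set T}) :
  #|S| < #|A| -> exists2 x, x \in A & x \notin S.
Proof.
move=> ltSA; apply/exists_inP; rewrite -negb_forall_in; apply: contraTN ltSA.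
by move=> /forall_inP AS; rewrite -leqNgt; apply/subset_leq_card/subsetP.
Qed.

Lemma exists_eq_andb (T : finType) (a : T) (Q : pred T) :
  [exists x, (x == a) && Q x] = Q a.
Proof.
by apply/existsP/idP => [[x /andP [/eqP -> //]]|Qa]; exists a; rewrite eqxx.
Qed.

Lemma exists_eq_or_andb (T : finType) (a : T) (R Q : pred T) :
  [exists x, ((x == a) || R x) && Q x] = Q a || [exists x, R x && Q x].
Proof.
apply/existsP/orP => [[x /andP [/orP [/eqP -> | Rx] Qx]]|[Qa|/existsP [x RQx]]].
- by left.
- by right; apply/existsP; exists x; rewrite Rx.
- by exists a; rewrite eqxx.
- by exists x; case/andP: RQx => -> ->; rewrite orbT.
Qed.

Section Distances.
Variables (V : finType) (e : rel V).

Lemma in_ball0 u w : (w \in ball e u 0) = (w == u).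
Proof. by rewrite inE. Qed.

Lemma in_ballS u n w :
  (w \in ball e u n.+1) = (w \in ball e u n) || [exists x in ball e u n, e x w].
Proof. by rewrite /= !inE. Qed.

Lemma ball_stable u n :
  ball e u n.+1 = ball e u n -> forall m, n <= m -> ball e u m = ball e u n.
Proof.
move=> stable; elim=> [|m IH]; first by rewrite leqn0 => /eqP ->.
by rewrite leq_eqVlt => /orP [/eqP <- //| /IH Hm]; rewrite /= Hm; exact: stable.
Qed.

Lemma Gamma_i0 u : Gamma_i e u 0 = [set u].
Proof. by rewrite /Gamma_i setD0. Qed.

Lemma hom_at1 (Y : {set V}) : hom_at e Y 1.
Proof.
by exists 1 => x y z _ _ zx zy; rewrite Gamma_i0 setIC card_set1I inE zx zy.
Qed.

End Distances.

Section IncidenceGraph.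
Variables (P B : finType) (I : P -> B -> bool).
Local Notation adj := (incidence_adj I).
Local Notation ball := (ball adj).
Local Notation Gamma := (Gamma_i adj).

Definition meets (X Y : B) : bool := [exists p, I p X && I p Y].
Definition collinear (p q : P) : bool := [exists Z, I p Z && I q Z].

Lemma meets_at p X Y : I p X -> I p Y -> meets X Y.
Proof. by move=> pX pY; apply/existsP; exists p; rewrite pX. Qed.

Lemma meetsC X Y : meets X Y = meets Y X.
Proof. by apply: eq_existsb => p; rewrite andbC. Qed.

Lemma lambda_gt0 p q : (0 < lambda I p q) = collinear p q.
Proof.
apply/card_gt0P/existsP => -[Z]; first by rewrite inE; exists Z.
by exists Z; rewrite inE.
Qed.

Definition nonflag_connected : Prop :=
  forall q X, ~~ I q X -> exists2 Z, I q Z & meets Z X.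

Lemma exists_adj_pt (A : {set P + B}) p :
  [exists x in A, adj x (inl p)] = [exists X, (inr X \in A) && I p X].
Proof.
apply/existsP/existsP => [[[q|X] /andP [xA /= pX]] //|[X /andP [XA pX]]].
  by exists X; rewrite xA.
by exists (inr X); rewrite XA.
Qed.

Lemma exists_adj_blk (A : {set P + B}) X :
  [exists x in A, adj x (inr X)] = [exists p, (inl p \in A) && I p X].
Proof.
apply/existsP/existsP => [[[p|Y] /andP [xA /= pX]] //|[p /andP [pA pX]]].
  by exists p; rewrite xA.
by exists (inl p); rewrite pA.
Qed.

Lemma ball_blk1_pt X p : (inl p \in ball (inr X) 1) = I p X.
Proof.
rewrite in_ballS in_ball0 exists_adj_pt.
under eq_existsb => Y do rewrite in_ball0 (inj_eq (@inr_inj _ _)).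
by rewrite exists_eq_andb.
Qed.

Lemma ball_blk1_blk X Y : (inr Y \in ball (inr X) 1) = (Y == X).
Proof.
rewrite in_ballS in_ball0 exists_adj_blk (inj_eq (@inr_inj _ _)).
under eq_existsb => p do rewrite in_ball0 /=.
by case: existsP => [[]|]; rewrite ?orbF.
Qed.

Lemma ball_blk2_pt X p : (inl p \in ball (inr X) 2) = I p X.
Proof.
rewrite in_ballS ball_blk1_pt exists_adj_pt.
under eq_existsb => Y do rewrite ball_blk1_blk.
by rewrite exists_eq_andb orbb.
Qed.

Lemma ball_blk2_blk X Y : (inr Y \in ball (inr X) 2) = (Y == X) || meets X Y.
Proof.
rewrite in_ballS ball_blk1_blk exists_adj_blk.
by under eq_existsb => p do rewrite ball_blk1_pt.
Qed.

Lemma ball_blk3_pt X q :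
  (inl q \in ball (inr X) 3) = I q X || [exists Z, meets X Z && I q Z].
Proof.
rewrite in_ballS ball_blk2_pt exists_adj_pt.
under eq_existsb => Z do rewrite ball_blk2_blk.
by rewrite exists_eq_or_andb orbA orbb.
Qed.

Lemma ball_blk3_blk X Y : (inr Y \in ball (inr X) 3) = (Y == X) || meets X Y.
Proof.
rewrite in_ballS ball_blk2_blk exists_adj_blk.
under eq_existsb => p do rewrite ball_blk2_pt.
by rewrite -orbA orbb.
Qed.

Lemma ball_pt1_pt q p : (inl p \in ball (inl q) 1) = (p == q).
Proof.
rewrite in_ballS in_ball0 exists_adj_pt (inj_eq (@inl_inj _ _)).
under eq_existsb => Y do rewrite in_ball0 /=.
by case: existsP => [[]|]; rewrite ?orbF.
Qed.

Lemma ball_pt1_blk q Y : (inr Y \in ball (inl q) 1) = I q Y.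
Proof.
rewrite in_ballS in_ball0 exists_adj_blk.
under eq_existsb => p do rewrite in_ball0 (inj_eq (@inl_inj _ _)).
by rewrite exists_eq_andb.
Qed.

Lemma ball_pt2_pt q p : (inl p \in ball (inl q) 2) = (p == q) || collinear q p.
Proof.
rewrite in_ballS ball_pt1_pt exists_adj_pt.
by under eq_existsb => Y do rewrite ball_pt1_blk.
Qed.

Lemma Gamma_blk1_pt X p : (inl p \in Gamma (inr X) 1) = I p X.
Proof. by rewrite inE in_ball0 ball_blk1_pt. Qed.

Lemma Gamma_blk1_blk X Y : (inr Y \in Gamma (inr X) 1) = false.
Proof. by rewrite inE in_ball0 ball_blk1_blk andNb. Qed.

Lemma Gamma_blk2_pt X p : (inl p \in Gamma (inr X) 2) = false.
Proof. by rewrite inE ball_blk1_pt ball_blk2_pt andNb. Qed.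

Lemma Gamma_blk2_blk X Y : (inr Y \in Gamma (inr X) 2) = (Y != X) && meets X Y.
Proof.
by rewrite inE ball_blk1_blk ball_blk2_blk; case: eqP.
Qed.

Lemma Gamma_blk3_pt X q :
  (inl q \in Gamma (inr X) 3) = ~~ I q X && [exists Z, meets X Z && I q Z].
Proof.
by rewrite inE ball_blk2_pt ball_blk3_pt; case: (I q X).
Qed.

Lemma Gamma_pt2_pt q p : (inl p \in Gamma (inl q) 2) = (p != q) && collinear q p.
Proof.
by rewrite inE ball_pt1_pt ball_pt2_pt; case: eqP.
Qed.

End IncidenceGraph.

Section QuasiSymmetric01.
Variables (P B : finType) (I : P -> B -> bool).
Hypothesis qsI : quasi_symmetric I 0 1.
Local Notation adj := (incidence_adj I).
Local Notation Gamma := (Gamma_i adj).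
Local Notation blocks := (block_vertices P B).

Lemma meet_uniq X Y p q : X != Y -> I p X -> I p Y -> I q X -> I q Y -> p = q.
Proof.
move=> XY pX pY qX qY; case: qsI => _ /(_ X Y XY) le1 _ _.
have /card_le1_eqP : #|[set p | I p X && I p Y]| <= 1 by case: le1 => ->.
by apply; rewrite inE ?pX ?qX.
Qed.

Lemma lambda_le1 p q : p != q -> lambda I p q <= 1.
Proof.
move=> pq; apply/card_le1_eqP => X Y; rewrite !inE => /andP [pX qX] /andP [pY qY].
by apply/eqP; apply: contraNT pq => XY; apply/eqP; exact: (meet_uniq XY).
Qed.

Lemma disjoint_blocks : exists X Y, X != Y /\ ~~ meets I X Y.
Proof.
case: qsI => _ _ [X [Y [XY /eqP XY0]]] _; exists X, Y; split=> //.
apply/existsP => -[p pXY]; move: XY0; rewrite cards_eq0 => /eqP/setP/(_ p).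
by rewrite !inE pXY.
Qed.

Lemma Gamma1_blk_meet X Y p : X != Y -> I p X -> I p Y ->
  Gamma (inr X) 1 :&: Gamma (inr Y) 1 = [set inl p].
Proof.
move=> XY pX pY; apply/setP => -[q|Z]; rewrite in_setI in_set1; last first.
  by rewrite Gamma_blk1_blk.
rewrite !Gamma_blk1_pt (inj_eq (@inl_inj _ _)).
apply/andP/eqP => [[qX qY]|->]; last by rewrite pX pY.
exact: (meet_uniq XY).
Qed.

Lemma hom_at_blk_meet i X Y p z1 z2 : hom_at adj blocks i.+1 ->
  X != Y -> I p X -> I p Y ->
  z1 \in Gamma (inr X) i.+1 -> z1 \in Gamma (inr Y) i.+1 ->
  z2 \in Gamma (inr X) i.+1 -> z2 \in Gamma (inr Y) i.+1 ->
  (inl p \in Gamma z1 i) = (inl p \in Gamma z2 i).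
Proof.
move=> [c hom] XY pX pY z1X z1Y z2X z2Y.
have Y2 : inr Y \in Gamma (inr X) 2 by rewrite Gamma_blk2_blk eq_sym XY (meets_at pX pY).
have Xblk : inr X \in blocks by rewrite inE.
have := hom _ _ _ Xblk Y2 z1X z1Y; have := hom _ _ _ Xblk Y2 z2X z2Y.
rewrite (Gamma1_blk_meet XY pX pY) !card_set1I => <-.
by case: (_ \in _); case: (_ \in _).
Qed.

Lemma ecc_ge4 D : 3 <= D -> (forall x, x \in blocks -> eccentricity_is adj x D) -> 4 <= D.
Proof.
move=> D3 ecc; have [X [Y [XY XYdisj]]] := disjoint_blocks.
rewrite ltn_neqAle D3 andbT; apply: contraNneq XY => D_eq3.
have Xblk : inr X \in blocks by rewrite inE.
have [/(_ (inr Y)) + _] := ecc (inr X) Xblk.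
by rewrite -D_eq3 ball_blk3_blk (negbTE XYdisj) orbF eq_sym.
Qed.

End QuasiSymmetric01.

Section GeneralizedQuadrangle.
Variables (P B : finType) (I : P -> B -> bool) (r k : nat).
Hypothesis gqI : generalized_quadrangle I r k.

Lemma gq_nonflag_connected : nonflag_connected I.
Proof.
move=> q X qX; case: gqI => _ _ _ /(_ q X qX) one.
have /card_gt0P [Z] : 0 < #|[set Z | I q Z && meets I Z X]| by rewrite one.
by rewrite inE => /andP [qZ ZX]; exists Z.
Qed.

Lemma gq_block_uniq q X Z1 Z2 : ~~ I q X ->
  I q Z1 -> meets I Z1 X -> I q Z2 -> meets I Z2 X -> Z1 = Z2.
Proof.
case: gqI => _ _ _ /(_ q X) one qX qZ1 Z1X qZ2 Z2X.
have /card_le1_eqP : #|[set Z | I q Z && meets I Z X]| <= 1 by rewrite one.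
by apply; rewrite inE ?qZ1 ?qZ2.
Qed.

End GeneralizedQuadrangle.

Section Design.
Variables (P B : finType) (I : P -> B -> bool) (v b r k lam1 t : nat).
Hypotheses (spI : is_SPBIBD I v b r k lam1 0 (k - 1) t)
  (qsI : quasi_symmetric I 0 1) (r_ge3 : 3 <= r).
Local Notation adj := (incidence_adj I).
Local Notation ball := (ball adj).
Local Notation Gamma := (Gamma_i adj).
Local Notation blocks := (block_vertices P B).
Local Notation GQ := (generalized_quadrangle I r k).

Lemma block_through_other p X Y : exists2 Z, I p Z & (Z != X) && (Z != Y).
Proof.
case: spI => -[_ _ _ rp _] _ _ _.
have /exists_notin [Z] : #|[set X; Y]| < #|[set Z | I p Z]|.
  by rewrite rp cards2 (leq_trans _ r_ge3) // !ltnS leq_b1.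
by rewrite !inE negb_or; exists Z.
Qed.

Lemma point_on X : 0 < k -> exists q, I q X.
Proof.
case: spI => -[_ _ kX _ _] _ _ _; rewrite -(kX X) => /card_gt0P [q].
by rewrite inE; exists q.
Qed.

Lemma point_on_other X p : 1 < k -> exists2 q, I q X & q != p.
Proof.
case: spI => -[_ _ kX _ _] _ _ _ k2.
have /exists_notin [q] : #|[set p]| < #|[set q | I q X]| by rewrite kX cards1.
by rewrite !inE; exists q.
Qed.

Lemma point_off X : exists q, ~~ I q X.
Proof.
case: spI => -[vP _ kX _ [kv _]] _ _ _.
have /exists_notin [q _] : #|[set q | I q X]| < #|[set: P]| by rewrite kX cardsT vP.
by rewrite inE; exists q.
Qed.

Lemma lambda_collinear p q : p != q -> collinear I p q -> lambda I p q = lam1.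
Proof. by case: spI => _ lam _ _ pq; rewrite -lambda_gt0; case: (lam _ _ pq) => ->. Qed.

(* t is the same for every non-flag, and lambda_2 = 0 makes the lambda_1-pairs
   exactly the collinear pairs. *)
Lemma nonflag_connected_of_one q0 X0 :
  ~~ I q0 X0 -> [exists Z, meets I X0 Z && I q0 Z] -> nonflag_connected I.
Proof.
move=> q0X0 /existsP [Z0 /andP [/existsP [p0 /andP [p0X0 p0Z0]] q0Z0]] q X qX.
have col0 : collinear I q0 p0 by apply/existsP; exists Z0; rewrite q0Z0.
have q0p0 : q0 != p0 by apply: contraNneq q0X0 => ->.
have /card_gt0P [p] : 0 < #|[set p | I p X && (lambda I q p == lam1)]|.
  case: spI => _ _ _ tcard; rewrite tcard // -(tcard _ _ q0X0).

  by apply/card_gt0P; exists p0; rewrite inE p0X0 (lambda_collinear q0p0 col0) eqxx.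
rewrite inE => /andP [pX /eqP lam_qp].
have : collinear I q p by rewrite -lambda_gt0 lam_qp -(lambda_collinear q0p0 col0) lambda_gt0.
by case/existsP => Z /andP [qZ pZ]; exists Z => //; exact: meets_at pZ pX.
Qed.

(* Otherwise the ball around X would stop growing at radius 2 and miss the
   points off X. *)
Lemma nonflag_connected_of_ball X D : 2 <= D -> (forall w, w \in ball (inr X) D) ->
  nonflag_connected I.
Proof.
move=> D2 ballD.
have [q0 /andP [q0X q0reach]] : exists q0, ~~ I q0 X && [exists Z, meets I X Z && I q0 Z].
  apply/existsP; apply: contraT; rewrite negb_exists => /forallP none.
  have stable : ball (inr X) 3 = ball (inr X) 2.
    apply/setP => -[q|Y]; last by rewrite ball_blk3_blk ball_blk2_blk.
    rewrite ball_blk3_pt ball_blk2_pt; case: (boolP (I q X)) => //= qX.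
    by apply: negbTE; move: (none q); rewrite qX.
  have [q qX] := point_off X.
  by move: (ballD (inl q)); rewrite (ball_stable stable D2) ball_blk2_pt (negbTE qX).
exact: nonflag_connected_of_one q0X q0reach.
Qed.

Lemma two_le_k_of_nonflag_connected : nonflag_connected I -> 1 < k.
Proof.
move=> reach; have [X _] := disjoint_blocks qsI; have [q qX] := point_off X.
have [Z qZ /existsP [p /andP [pZ pX]]] := reach q X qX.
case: spI => -[_ _ kZ _ _] _ _ _; rewrite -(kZ Z); apply/card_gt1P; exists q, p.
by rewrite !inE qZ pZ; split=> //; apply: contraNneq qX => ->.
Qed.

Lemma hom_at2_nonflag_uniq p X Z1 Z : hom_at adj blocks 2 -> ~~ I p X ->
  I p Z1 -> meets I Z1 X -> I p Z -> meets I Z X -> Z = Z1.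
Proof.
move=> hom2 pX pZ1 /existsP [q1 /andP [q1Z1 q1X]] pZ /existsP [q2 /andP [q2Z q2X]].
apply/eqP/negbNE/negP => ZZ1.
have XZ1 : X != Z1 by apply: contraNneq pX => ->.
have [W q1W /andP [WX WZ1]] := block_through_other q1 X Z1.
have W2X : inr W \in Gamma (inr X) 2 by rewrite Gamma_blk2_blk WX (meets_at q1X q1W).
have W2Z1 : inr W \in Gamma (inr Z1) 2 by rewrite Gamma_blk2_blk WZ1 (meets_at q1Z1 q1W).
have Z2X : inr Z \in Gamma (inr X) 2.
  by rewrite Gamma_blk2_blk (meets_at q2X q2Z) andbT; apply: contraNneq pX => <-.
have Z2Z1 : inr Z \in Gamma (inr Z1) 2 by rewrite Gamma_blk2_blk ZZ1 (meets_at pZ1 pZ).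
have := hom_at_blk_meet qsI hom2 XZ1 q1X q1Z1 W2X W2Z1 Z2X Z2Z1.
rewrite !Gamma_blk1_pt q1W => /esym q1Z.
by move: pX; rewrite (meet_uniq qsI ZZ1 pZ pZ1 q1Z q1Z1) q1X.
Qed.

Lemma gq_of_hom_at2 D : 2 <= D -> (forall x, x \in blocks -> eccentricity_is adj x D) ->
  hom_at adj blocks 2 -> GQ.
Proof.
move=> D2 ecc hom2; have [X0 _] := disjoint_blocks qsI.
have X0blk : inr X0 \in blocks by rewrite inE.
have [ballX0 _] := ecc (inr X0) X0blk.
have reach := nonflag_connected_of_ball D2 ballX0.
have k2 := two_le_k_of_nonflag_connected reach.
split; [exact: lambda_le1 qsI | lia | lia |].
move=> p X pX; have [Z1 pZ1 Z1X] := reach p X pX.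
apply/eqP/cards1P; exists Z1; apply/setP => Z; rewrite !inE.
apply/andP/eqP => [[pZ ZX]|->]; last by [].
exact: hom_at2_nonflag_uniq hom2 pX pZ1 Z1X pZ ZX.
Qed.

Section Quadrangle.
Hypothesis gqI : GQ.

Lemma gq_two_le_k : 1 < k.
Proof. exact: two_le_k_of_nonflag_connected (gq_nonflag_connected gqI). Qed.

Lemma gq_reach X q : ~~ I q X -> [exists Z, meets I X Z && I q Z].
Proof.
by move=> qX; have [Z qZ ZX] := gq_nonflag_connected gqI qX; apply/existsP; exists Z; rewrite meetsC ZX.
Qed.

Lemma gq_pt_ball3 X q : inl q \in ball (inr X) 3.
Proof. by rewrite ball_blk3_pt; case: (boolP (I q X)) => //= /gq_reach. Qed.

Lemma gq_Gamma3 X q : ~~ I q X -> inl q \in Gamma (inr X) 3.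
Proof. by move=> qX; rewrite Gamma_blk3_pt qX gq_reach. Qed.

Lemma gq_ball4 X w : w \in ball (inr X) 4.
Proof.
rewrite in_ballS; case: w => [q|Y]; first by rewrite gq_pt_ball3.
have [q qY] := point_on Y (ltnW gq_two_le_k).
by rewrite exists_adj_blk; apply/orP; right; apply/existsP; exists q; rewrite gq_pt_ball3.
Qed.

Lemma gq_ecc4 X : eccentricity_is adj (inr X) 4.
Proof.
split=> [w|]; first exact: gq_ball4.
have [q qX] := point_off X; have [Z qZ ZX] := gq_nonflag_connected gqI qX.
have [Y qY /andP [YZ _]] := block_through_other q Z Z.
apply/set0Pn; exists (inr Y); rewrite /Gamma_i in_setD gq_ball4 andbT ball_blk3_blk negb_or.
apply/andP; split; first by apply: contraNneq qX => <-.
by apply: contra YZ => XY; rewrite (gq_block_uniq gqI qX qY _ qZ ZX) // meetsC.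
Qed.

Lemma gq_hom_at2 : hom_at adj blocks 2.
Proof.
exists 1 => -[p|X] y z; rewrite inE // => _.
case: y => [q|Y]; rewrite ?Gamma_blk2_pt // Gamma_blk2_blk => /andP [YX /existsP [p /andP [pX pY]]].
case: z => [q|Z]; rewrite ?Gamma_blk2_pt // !Gamma_blk2_blk.
move=> /andP [ZX /existsP [a /andP [aX aZ]]] /andP [ZY /existsP [c /andP [cY cZ]]].
rewrite (Gamma1_blk_meet qsI _ pX pY) 1?eq_sym // card_set1I Gamma_blk1_pt.
case: (eqVneq a p) => [<-|ap]; first by rewrite aZ.
have aY : ~~ I a Y by apply: contra ap => aY; apply/eqP; rewrite (meet_uniq qsI _ aX aY pX pY) // eq_sym.
by move: ZX; rewrite -(gq_block_uniq gqI aY aX (meets_at pX pY) aZ (meets_at cZ cY)) eqxx.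
Qed.

Lemma almost_hom_of_gq : almost_2_Y_homogeneous adj blocks.
Proof.
exists 4; split=> //; split=> [x|i /andP [i1 i2]].
  by case: x => [p|X]; rewrite inE // => _; exact: gq_ecc4.
have [->|->] : i = 1 \/ i = 2 by lia.
  exact: hom_at1.
exact: gq_hom_at2.
Qed.

Lemma gq_noncollinear_off X p0 : I p0 X -> exists2 z, ~~ I z X & ~~ collinear I z p0.
Proof.
move=> p0X; have [a aX ap0] := point_on_other X p0 gq_two_le_k.
have [w aw /andP [wX _]] := block_through_other a X X.
have [z zw za] := point_on_other w a gq_two_le_k.
have zX : ~~ I z X by apply: contra za => zX; rewrite (meet_uniq qsI wX zw zX aw aX).
exists z => //; apply/existsP => -[V /andP [zV p0V]].
have Vw := gq_block_uniq gqI zX zV (meets_at p0V p0X) zw (meets_at aw aX).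
rewrite {}Vw in p0V.
by move: ap0; rewrite (meet_uniq qsI wX aw aX p0V p0X) eqxx.
Qed.

Lemma not_hom_at3_of_gq : ~ hom_at adj blocks 3.
Proof.
move=> hom3; have [X [_ _]] := disjoint_blocks qsI.
have [p0 p0X] := point_on X (ltnW gq_two_le_k).
have [Y p0Y /andP [YX _]] := block_through_other p0 X X.
have [W p0W /andP [WX WY]] := block_through_other p0 X Y.
have [z1 z1W z1p0] := point_on_other W p0 gq_two_le_k.
have z1_off U : U != W -> I p0 U -> ~~ I z1 U.
  by move=> UW p0U; apply: contra z1p0 => z1U; rewrite (meet_uniq qsI UW z1U z1W p0U p0W).
have z1X : ~~ I z1 X by rewrite z1_off // eq_sym.
have z1Y : ~~ I z1 Y by rewrite z1_off // eq_sym.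
have z1p0_col : collinear I z1 p0 by apply/existsP; exists W; rewrite z1W.
have [z2 z2X z2p0_col] := gq_noncollinear_off p0X.
have z2Y : ~~ I z2 Y by apply: contra z2p0_col => z2Y; apply/existsP; exists Y; rewrite z2Y.
have XY : X != Y by rewrite eq_sym.
have := hom_at_blk_meet qsI hom3 XY p0X p0Y
  (gq_Gamma3 z1X) (gq_Gamma3 z1Y) (gq_Gamma3 z2X) (gq_Gamma3 z2Y).
by rewrite !Gamma_pt2_pt z1p0_col (negbTE z2p0_col) andbF andbT eq_sym z1p0.
Qed.

End Quadrangle.

End Design.

Theorem proposition4p13 (P B : finType) (I : P -> B -> bool)
    (v b r k lam1 t : nat) :
  is_SPBIBD I v b r k lam1 0 (k - 1) t ->
  quasi_symmetric I 0 1 ->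
  3 <= r ->
  (almost_2_Y_homogeneous (incidence_adj I) (block_vertices P B)
     <-> generalized_quadrangle I r k) /\
  ~ two_Y_homogeneous (incidence_adj I) (block_vertices P B).
Proof.
move=> spI qsI r_ge3; split; first split.
- move=> [D [D3 [ecc hom]]]; have D4 := ecc_ge4 qsI D3 ecc.
  by apply: (gq_of_hom_at2 spI qsI r_ge3 (ltnW D3) ecc); apply: hom; lia.
- exact: almost_hom_of_gq spI qsI r_ge3.
- move=> [D [D3 [ecc hom]]]; have D4 := ecc_ge4 qsI D3 ecc.
  have gqI : generalized_quadrangle I r k.
    by apply: (gq_of_hom_at2 spI qsI r_ge3 (ltnW D3) ecc); apply: hom; lia.
  by apply: (not_hom_at3_of_gq spI qsI r_ge3 gqI); apply: hom; lia.
Qed.
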